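(* Let $R$ be a right semihereditary ring such that $M_n(R)$ is a Baer ring for every $n\ge1$, let $M$ be a finitely generated right $R$-module and $K$ a submodule of $M$. (1) $M/\mathrm{cl}_{\mathbf B}(K)$ is finitely generated projective and $\mathrm{cl}_{\mathbf B}(K)$ is a direct summand of $M$. In particular $M=\mathbf B M\oplus \mathbf U M$, where $\mathbf BM$ is the bounded torsion submodule of $M$ and $\mathbf UM\cong M/\mathbf BM$ is finitely generated projective. (2) If moreover $R$ is right strongly semihereditary, then $\mathrm{cl}_{\mathbf T}(K)=\mathrm{cl}_{\mathbf B}(K)$ is a direct summand of $M$, and the torsion theories $(\mathbf B,\mathbf U)$ and $(\mathbf T,\mathbf P)$ coincide on the class of finitely generated modules. In particular every finitely generated right $R$-module is the direct sum of a finitely generated projective module and a singular module.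
   Context: $(\mathbf B,\mathbf U)$ is the torsion theory whose torsion class $\mathbf B$ consists of the right modules $M$ with $\mathrm{Hom}_R(M,R)=0$ (bounded modules); $\mathbf BM$ is the largest bounded submodule of $M$ and $\mathbf UM=M/\mathbf BM$. For a torsion theory with torsion class $\mathcal T$, $\mathrm{cl}_{\mathcal T}^M(K)=\pi^{-1}(\mathcal T(M/K))$ where $\pi:M\to M/K$. $(\mathbf T,\mathbf P)$ is the Goldie torsion theory (torsion-free class = nonsingular modules; for right nonsingular $R$ the torsion modules are the singular ones). A ring is Baer if every right annihilator is generated by an idempotent. $R$ is right strongly semihereditary if $R$ is right nonsingular and every finitely generated nonsingular right $R$-module is projective. *)

(* Right R-modules are modelled as left modules over the
   converse ring R^c (so  a *: m  stands for the right action  m . a). *)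
From HB Require Import structures.
From mathcomp Require Import all_boot all_order all_algebra.
Set Implicit Arguments. Unset Strict Implicit. Unset Printing Implicit Defensive.
Import GRing.Theory.
Local Open Scope ring_scope.

Section RightModules.
Variable R : nzRingType.

(* the regular right module R_R *)
Definition RR : lmodType R^c := (R^c)^o.

Definition linear_on (M N : lmodType R^c) (X : M -> Prop) (f : M -> N) : Prop :=
  (forall x y, X x -> X y -> f (x + y) = f x + f y) /\
  (forall (a : R^c) x, X x -> f (a *: x) = a *: f x).

Definition full_sub (M : lmodType R^c) : M -> Prop := fun _ => True.

Section InModule.
Variable M : lmodType R^c.

Definition submod (X : M -> Prop) : Prop :=
  [/\ X 0, (forall x y, X x -> X y -> X (x + y)) &
      (forall (a : R^c) x, X x -> X (a *: x))].

Definition zero_sub : M -> Prop := fun x => x = 0.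
Definition incl (X Y : M -> Prop) : Prop := forall x, X x -> Y x.


(* f restricted to X induces a homomorphism X/K -> N  (for K <= X) *)
Definition hom_sq (N : lmodType R^c) (K X : M -> Prop) (f : M -> N) : Prop :=
  linear_on X f /\ (forall k, K k -> f k = 0).

Definition bounded_sq (K X : M -> Prop) : Prop :=
  forall f : M -> RR, hom_sq K X f -> forall x, X x -> f x = 0.

Definition fg_sq (K X : M -> Prop) : Prop :=
  exists n (v : 'I_n -> M), (forall i, X (v i)) /\
    forall x, X x -> exists c : 'I_n -> R^c, K (x - \sum_(i < n) c i *: v i).

Definition proj_sq (K X : M -> Prop) : Prop :=
  forall (A B : lmodType R^c) (g : A -> B),
    linear_on (@full_sub A) g -> (forall b, exists a, g a = b) ->
    forall f : M -> B, hom_sq K X f ->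
    exists h : M -> A, hom_sq K X h /\ forall x, X x -> g (h x) = f x.

(* cl_B^M(K) = pi^-1 (B(M/K)); B(M/K) is the largest bounded submodule of M/K,
   i.e. the union (= sum) of all bounded submodules X/K, K <= X <= M. *)
Definition Bcl (K : M -> Prop) : M -> Prop := fun x =>
  exists X, [/\ submod X, incl K X, X x & bounded_sq K X].

Definition dsum (X Y : M -> Prop) : Prop :=
  [/\ submod X, submod Y, (forall x, X x -> Y x -> x = 0) &
      (forall m, exists x y, [/\ X x, Y y & m = x + y])].

Definition summand (X : M -> Prop) : Prop := exists Y, dsum X Y.

End InModule.

Definition essential_rideal (I : RR -> Prop) : Prop :=
  submod I /\
  forall J : RR -> Prop, submod J -> (exists j, J j /\ j <> 0) ->
    exists z, [/\ I z, J z & z <> 0].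

Section InModule2.
Variable M : lmodType R^c.

(* y + K is a singular element of M/K : y.I <= K for an essential right ideal I *)
Definition sing_rel (K : M -> Prop) (y : M) : Prop :=
  exists I : RR -> Prop, essential_rideal I /\ forall a : RR, I a -> K ((a : R^c) *: y).

(* cl_T^M(K) = pi^-1 (Z_2(M/K)) : x + K lies in the Goldie torsion submodule
   Z_2(M/K), i.e. x.I is singular modulo K for some essential right ideal I *)
Definition Tcl (K : M -> Prop) : M -> Prop := fun x =>
  exists I : RR -> Prop, essential_rideal I /\
    forall a : RR, I a -> sing_rel K ((a : R^c) *: x).

Definition fg_mod : Prop := fg_sq (@zero_sub M) (@full_sub M).
Definition projective_mod : Prop := proj_sq (@zero_sub M) (@full_sub M).
Definition bounded_mod : Prop := bounded_sq (@zero_sub M) (@full_sub M).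
Definition Btorsionfree_mod : Prop := forall x, Bcl (@zero_sub M) x -> x = 0.
Definition Gtorsion_mod : Prop := forall x, Tcl (@zero_sub M) x.
Definition Gtorsionfree_mod : Prop := forall x, Tcl (@zero_sub M) x -> x = 0.
Definition nonsingular_mod : Prop := forall x, sing_rel (@zero_sub M) x -> x = 0.
Definition singular_sub (S : M -> Prop) : Prop :=
  forall x, S x -> sing_rel (@zero_sub M) x.

End InModule2.

Definition right_semihereditary : Prop :=
  forall I : RR -> Prop, submod I -> fg_sq (@zero_sub RR) I ->
    proj_sq (@zero_sub RR) I.

Definition right_nonsingular : Prop := nonsingular_mod RR.

Definition right_strongly_semihereditary : Prop :=
  right_nonsingular /\
  forall N : lmodType R^c, fg_mod N -> nonsingular_mod N -> projective_mod N.

End RightModules.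

Definition baer (A : nzRingType) : Prop :=
  forall S : A -> Prop, exists e : A, e * e = e /\
    forall x : A, (forall s, S s -> s * x = 0) <-> exists y, x = e * y.

From HB Require Import structures.
From mathcomp Require Import all_boot all_order all_algebra.
From Stdlib Require Import Classical ClassicalEpsilon.
From Stdlib Require Import FunctionalExtensionality PropExtensionality.
Set Implicit Arguments. Unset Strict Implicit. Unset Printing Implicit Defensive.
Import GRing.Theory.
Local Open Scope ring_scope.

(* Fix generators v_0, ..., v_n of M and let  colv j X  be the
   element  sum_i X_ij v_i  of M coded by the j-th column of a matrix X of
   M_{n+1}(R).  Let S be the set of matrices all of whose columns lie in K and
   let e be the idempotent with  r.ann (l.ann S) = e M_{n+1}(R)  given by the
   Baer property; put f = 1 - e.  Since every column of an element of S lies in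
   K, the column  (f X)_0  depends only on  colv 0 X  modulo K; this gives an
   R-linear projection of M with kernel  D = {colv 0 (e X)}  and image
   P = {colv 0 (f X)}, so M = D (+) P, and P is finitely generated projective
   because it is coordinatised by the entries of  (f X)_0.  A homomorphism
   M -> R vanishing on K yields a row of l.ann S, hence kills D; conversely the
   coordinate maps of P show that D/K is bounded.  Thus D = cl_B(K) (part (1)).
   For part (2), over a right nonsingular ring homomorphisms into R kill Goldie
   closures, so cl_T(K) <= D; and M/cl_T(K) is finitely generated nonsingular,
   hence projective, so its elements are separated by maps into R, which all
   kill D: hence D <= cl_T(K). *)

Lemma pred_ext (T : Type) (X Y : T -> Prop) : (forall x, X x <-> Y x) -> X = Y.
Proof.
by move=> XY; apply: functional_extensionality => x; apply: propositional_extensionality.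
Qed.

Section LinearMaps.
Variable R : nzRingType.

Lemma linear_on0 (M N : lmodType R^c) (X : M -> Prop) (phi : M -> N) :
  submod X -> linear_on X phi -> phi 0 = 0.
Proof.
case=> X0 _ _ [_ phiZ].
by rewrite -(scale0r (0 : M)) phiZ // scale0r.
Qed.

Lemma linear_on_sum (M N : lmodType R^c) (X : M -> Prop) (phi : M -> N)
  (I : Type) (r : seq I) (c : I -> R^c) (w : I -> M) :
  submod X -> linear_on X phi -> (forall i, X (w i)) ->
  X (\sum_(i <- r) c i *: w i) /\
  phi (\sum_(i <- r) c i *: w i) = \sum_(i <- r) c i *: phi (w i).
Proof.
move=> sX linphi Xw; case: (sX) => X0 XD XZ; case: (linphi) => phiD phiZ.
apply: (big_rec2 (fun y1 y2 => X y1 /\ phi y1 = y2)).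
  by split => //; apply: linear_on0 sX linphi.
move=> i y1 y2 _ [Xy1 <-]; split; first by apply: XD => //; apply: XZ.
by rewrite phiD ?phiZ //; apply: XZ.
Qed.

Lemma linear_on_sub (M N : lmodType R^c) (X : M -> Prop) (phi : M -> N) :
  linear_on (@full_sub _ M) phi -> linear_on X phi.
Proof. by case=> phiD phiZ; split=> *; [apply: phiD | apply: phiZ]. Qed.

Lemma submod_full (M : lmodType R^c) : submod (@full_sub R M).
Proof. by []. Qed.

Lemma submod_zero (M : lmodType R^c) : submod (@zero_sub R M).
Proof.
split; rewrite /zero_sub //; first by move=> x y -> ->; rewrite addr0.
by move=> a x ->; rewrite scaler0.
Qed.

Lemma dsumC (M : lmodType R^c) (X Y : M -> Prop) : dsum X Y -> dsum Y X.
Proof.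
move=> [sX sY cap sum]; split => //; first by move=> x Yx Xx; apply: cap.
by move=> m; have [x [y [Xx Yy ->]]] := sum m; exists y, x; split => //; rewrite addrC.
Qed.

Lemma bounded_modE (M : lmodType R^c) :
  bounded_mod M <-> forall x, Bcl (@zero_sub _ M) x.
Proof.
split=> [bM x | Bfull f [linf f0] x _]; first by exists (@full_sub _ M).
have [X [sX _ Xx bX]] := Bfull x.
by apply: (bX f) => //; split => //; apply: linear_on_sub.
Qed.

(* A finitely generated module has a generating family indexed by some 'I_n.+1
   (pad with 0), matching the sizes of the Baer matrix rings M_{n+1}(R). *)
Lemma fg_generators (M : lmodType R^c) : fg_mod M ->
  exists n (v : 'I_n.+1 -> M),
    forall x, exists c : 'I_n.+1 -> R^c, x = \sum_i c i *: v i.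
Proof.
move=> [n [v [_ gen]]].
exists n, (fun i => if unlift ord_max i is Some j then v j else 0) => x.
have [c hc] := gen x I; rewrite /zero_sub in hc.
exists (fun i => if unlift ord_max i is Some j then c j else 0).
rewrite (bigD1_ord ord_max) //= unlift_none scale0r add0r.
apply/eqP; rewrite -subr_eq0; apply/eqP; rewrite -[RHS]hc; congr (_ - _).
by apply: eq_bigr => j _; rewrite liftK.
Qed.

(* In a projective module with a finite generating family, nonzero elements
   are separated by homomorphisms into R: the presentation R^m -> N splits. *)
Lemma projective_separates (N : lmodType R^c) m (w : 'I_m -> N) :
  (forall x, exists c : 'I_m -> R^c, x = \sum_i c i *: w i) -> projective_mod N ->
  forall q, q <> 0 -> exists phi : N -> RR R, linear_on (@full_sub _ N) phi /\ phi q <> 0.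
Proof.
move=> genN projN q nq.
pose g (a : 'rV[R^c]_m) : N := \sum_i (a 0 i : R^c) *: w i.
have ling : linear_on (@full_sub _ _) g.
  split => [x y _ _|a x _]; rewrite /g.
    by rewrite -big_split; apply: eq_bigr => i _; rewrite mxE scalerDl.
  by rewrite scaler_sumr; apply: eq_bigr => i _; rewrite mxE scalerA.
have gsurj b : exists a, g a = b.
  by have [c ->] := genN b; exists (\row_i c i); apply: eq_bigr => i _; rewrite mxE.
have idN : hom_sq (@zero_sub _ N) (@full_sub _ N) id by split => //; split.
have [s [[[sD sZ] _] gs]] := projN _ _ g ling gsurj id idN.
have [i si] : exists i, s q 0 i != 0.
  apply: NNPP => sq0; apply: nq; rewrite -(gs q I).
  have -> : s q = 0.
    apply/matrixP => a b; rewrite (ord1 a) [RHS]mxE.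
    by apply: NNPP => sqb; apply: sq0; exists b; apply/eqP.
  exact: linear_on0 (submod_full _) ling.
exists (fun z => (s z 0 i : RR R)); split; last exact/eqP.
by split=> [x y _ _|a x _]; rewrite ?sD ?sZ // mxE.
Qed.

End LinearMaps.

Section SingularClosure.
Variable R : nzRingType.
Local Notation RRt := (RR R).

Lemma essential_full : essential_rideal (fun _ : RRt => True).
Proof.
split; first exact: (submod_full RRt).
by move=> J _ [j [Jj nj]]; exists j.
Qed.

Lemma essential_cap (I J : RRt -> Prop) : essential_rideal I -> essential_rideal J ->
  essential_rideal (fun a => I a /\ J a).
Proof.
move=> [[I0 ID IZ] essI] [[J0 JD JZ] essJ]; split.
  split => //; first by move=> x y [? ?] [? ?]; split; [apply: ID | apply: JD].
  by move=> a x [? ?]; split; [apply: IZ | apply: JZ].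
move=> L [L0 LD LZ] nzL.
have [z [Iz Lz nz]] := essI L (And3 L0 LD LZ) nzL.
have sIL : submod (fun a => I a /\ L a).
  split => //; first by move=> x y [? ?] [? ?]; split; [apply: ID | apply: LD].
  by move=> a x [? ?]; split; [apply: IZ | apply: LZ].
have [w [Jw [Iw Lw] nw]] := essJ _ sIL (ex_intro _ z (conj (conj Iz Lz) nz)).
by exists w.
Qed.

Lemma submod_cyclic (M : lmodType R^c) (y : M) :
  submod (fun z => exists r : R^c, z = r *: y).
Proof.
split; first by exists 0; rewrite scale0r.
  by move=> x1 y1 [r1 ->] [r2 ->]; exists (r1 + r2); rewrite scalerDl.
by move=> a x [r ->]; exists (a * r); rewrite scalerA.
Qed.

Lemma essential_pullback (I : RRt -> Prop) (c : RRt) : essential_rideal I ->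
  essential_rideal (fun a : RRt => I ((a : R^c) *: c)).
Proof.
move=> [[I0 ID IZ] essI]; split.
  split; first by rewrite scale0r.
    by move=> x y Ix Iy; rewrite scalerDl; apply: ID.
  by move=> a x Ix; rewrite -scalerA; apply: IZ.
move=> L [L0 LD LZ] [j [Lj nj]].
have [jc0|/eqP jc0] := eqVneq ((j : R^c) *: c) 0; first by exists j; rewrite jc0.
have [z [Iz [r def_z] nz]] := essI _ (submod_cyclic ((j : R^c) *: c))
   (ex_intro _ _ (conj (ex_intro _ 1 (esym (scale1r _))) jc0)).
exists (r *: j); split.
- by rewrite scalerA in def_z; rewrite -def_z.
- by apply: LZ.
- move=> rj0; have rj0' : (r * (j : R^c) : R^c) = 0 := rj0.
  by apply: nz; rewrite def_z scalerA rj0' scale0r.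
Qed.

Lemma essential_not_ann (hNS : right_nonsingular R) (I : RRt -> Prop) (c : RRt) :
  essential_rideal I -> c <> 0 -> exists a, I a /\ (a : R^c) *: c <> 0.
Proof.
move=> essI nc; apply: NNPP => noa; apply: nc; apply: hNS.
exists I; split => // a Ia; rewrite /zero_sub; apply: NNPP => ac0.
by apply: noa; exists a.
Qed.

Section InModule.
Variable M : lmodType R^c.

Lemma sing_rel_submod (Q : M -> Prop) : submod Q -> submod (sing_rel Q).
Proof.
move=> [Q0 QD QZ]; split.
- by exists (fun _ => True); split; [exact: essential_full | move=> a _; rewrite scaler0].
- move=> x y [I1 [ess1 h1]] [I2 [ess2 h2]]; exists (fun a => I1 a /\ I2 a).
  split; first exact: essential_cap.
  by move=> a [? ?]; rewrite scalerDr; apply: QD; [apply: h1 | apply: h2].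
- move=> r x [I [essI h]]; exists (fun a : RRt => I ((a : R^c) *: (r : RRt))).
  split; first exact: essential_pullback.
  by move=> a Ia; rewrite scalerA; apply: h.
Qed.

Lemma sub_sing_rel (Q : M -> Prop) : submod Q -> incl Q (sing_rel Q).
Proof.
move=> [_ _ QZ] x Qx; exists (fun _ => True); split; first exact: essential_full.
by move=> a _; apply: QZ.
Qed.

(* Over a right nonsingular ring  Z(M/Z(M/Q)) = 0, i.e. the Goldie closure
   Z_2 coincides with the singular closure. *)
Lemma sing_rel_idem (hNS : right_nonsingular R) (Q : M -> Prop) : submod Q ->
  forall y, sing_rel (sing_rel Q) y -> sing_rel Q y.
Proof.
move=> [Q0 QD QZ] y [I [[_ essI] sing_Iy]].
exists (fun c : RRt => Q ((c : R^c) *: y)); split => //; split.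
  split; first by rewrite scale0r.
    by move=> a b Qa Qb; rewrite scalerDl; apply: QD.
  by move=> r c Qc; rewrite -scalerA; apply: QZ.
move=> L [L0 LD LZ] nzL.
have [z [Iz Lz nz]] := essI L (And3 L0 LD LZ) nzL.
have [J [essJ QJ]] := sing_Iy z Iz.
have [b [Jb nb]] := essential_not_ann hNS essJ nz.
exists ((b : R^c) *: z); split => //; first by rewrite -scalerA; apply: QJ.
by apply: LZ.
Qed.

Lemma hom_kills_sing_rel (hNS : right_nonsingular R) (phi : M -> RRt) (Q : M -> Prop) :
  linear_on (@full_sub _ M) phi -> (forall y, Q y -> phi y = 0) ->
  forall y, sing_rel Q y -> phi y = 0.
Proof.
move=> [_ phiZ] phiQ y [I [essI QI]]; apply: hNS; exists I; split => // a Ia.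
by rewrite /zero_sub -phiZ // phiQ //; apply: QI.
Qed.

End InModule.
End SingularClosure.

(* The quotient module M/T of M by a submodule T, with canonical projection
   qproj.  Elements are canonical representatives chosen by Hilbert's epsilon. *)
Section QuotientModule.
Variable R : nzRingType.
Variable M : lmodType R^c.
Variable T : M -> Prop.
Hypothesis sT : submod T.

Let T0 : T 0. Proof. by case: sT. Qed.
Let TD x y : T x -> T y -> T (x + y). Proof. by case: sT => _ + _; apply. Qed.
Let TZ a x : T x -> T (a *: x). Proof. by case: sT => _ _; apply. Qed.
Let TB x y : T x -> T y -> T (x - y).
Proof. by move=> Tx Ty; apply: TD => //; rewrite -scaleN1r; apply: TZ. Qed.

Definition coset (m : M) : M -> Prop := fun y => T (y - m).
Definition rep (m : M) : M := epsilon (inhabits 0) (coset m).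

Lemma rep_coset m : T (rep m - m).
Proof. by apply: (epsilon_spec (inhabits 0) (coset m)); exists m; rewrite /coset subrr; exact: T0. Qed.

Lemma rep_eq m m' : rep m = rep m' <-> T (m - m').
Proof.
split=> [e | Tmm'].
  have := TB (rep_coset m') (rep_coset m); rewrite e.
  by rewrite opprB addrC addrA subrK addrC.
rewrite /rep; congr (epsilon _ _); apply: functional_extensionality => y.
apply: propositional_extensionality; rewrite /coset; split => Ty.
  by have := TD Ty Tmm'; rewrite addrA subrK.
by have := TB Ty Tmm'; rewrite opprB addrA subrK.
Qed.

Lemma rep_idem m : rep (rep m) == rep m.
Proof. by apply/eqP/rep_eq/rep_coset. Qed.

(* The module structure of the quotient depends on the submodule proof. *)
Definition quot of submod T := {m : M | rep m == m}.
Local Notation Mq := (quot sT).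
HB.instance Definition _ := Choice.on Mq.
Definition qproj (m : M) : Mq := exist _ (rep m) (rep_idem m).

Lemma qproj_eq m m' : qproj m = qproj m' <-> T (m - m').
Proof.
split=> [e | Tmm']; first by apply/rep_eq; have := congr1 val e.
by apply: val_inj => /=; apply/rep_eq.
Qed.

Lemma qproj_val (x : Mq) : qproj (val x) = x.
Proof. by apply: val_inj => /=; apply/eqP; case: x. Qed.

Let val_qproj m : T (val (qproj m) - m). Proof. exact: rep_coset. Qed.

Let addQ (x y : Mq) := qproj (val x + val y).
Let oppQ (x : Mq) := qproj (- val x).
Let scaleQ (a : R^c) (x : Mq) := qproj (a *: val x).

Let qproj_addl m m' : qproj (val (qproj m) + m') = qproj (m + m').
Proof. by apply/qproj_eq; rewrite opprD addrACA subrr addr0; exact: val_qproj. Qed.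
Let qproj_addr m m' : qproj (m + val (qproj m')) = qproj (m + m').
Proof. by rewrite addrC qproj_addl addrC. Qed.
Let qproj_add m m' : qproj (val (qproj m) + val (qproj m')) = qproj (m + m').
Proof. by rewrite qproj_addl qproj_addr. Qed.
Let qproj_scale a m : qproj (a *: val (qproj m)) = qproj (a *: m).
Proof. by apply/qproj_eq; rewrite -scalerBr; apply/TZ/val_qproj. Qed.

Let addQA : associative addQ.
Proof. by move=> x y z; rewrite /addQ qproj_addl qproj_addr addrA. Qed.
Let addQC : commutative addQ.
Proof. by move=> x y; rewrite /addQ addrC. Qed.
Let add0Q : left_id (qproj 0) addQ.
Proof. by move=> x; rewrite /addQ qproj_addl add0r qproj_val. Qed.
Let addNQ : left_inverse (qproj 0) oppQ addQ.
Proof. by move=> x; rewrite /addQ /oppQ qproj_addl addNr. Qed.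

HB.instance Definition _ := GRing.isZmodule.Build Mq addQA addQC add0Q addNQ.

Let scaleQA a b x : scaleQ a (scaleQ b x) = scaleQ (a * b) x.
Proof. by rewrite /scaleQ qproj_scale scalerA. Qed.
Let scale1Q : left_id 1 scaleQ.
Proof. by move=> x; rewrite /scaleQ scale1r qproj_val. Qed.
Let scaleQDr : right_distributive scaleQ +%R.
Proof.
move=> a x y; change (scaleQ a (addQ x y) = addQ (scaleQ a x) (scaleQ a y)).
by rewrite /scaleQ /addQ qproj_scale qproj_add scalerDr.
Qed.
Let scaleQDl x : {morph scaleQ^~ x : a b / a + b}.
Proof.
move=> a b; change (scaleQ (a + b) x = addQ (scaleQ a x) (scaleQ b x)).
by rewrite /scaleQ /addQ qproj_add scalerDl.
Qed.

HB.instance Definition _ :=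
  GRing.Zmodule_isLmodule.Build R^c Mq scaleQA scale1Q scaleQDr scaleQDl.

Lemma qprojD m m' : qproj (m + m') = qproj m + qproj m'.
Proof. by change (qproj (m + m') = addQ (qproj m) (qproj m')); rewrite /addQ qproj_add. Qed.

Lemma qprojZ a m : qproj (a *: m) = a *: qproj m.
Proof. by change (qproj (a *: m) = scaleQ a (qproj m)); rewrite /scaleQ qproj_scale. Qed.

Lemma qproj_eq0 m : qproj m = 0 <-> T m.
Proof. by change (qproj m = qproj 0 <-> T m); rewrite qproj_eq subr0. Qed.

Lemma qproj_linear : linear_on (@full_sub _ M) qproj.
Proof. by split => [x y _ _|a x _]; rewrite ?qprojD ?qprojZ. Qed.

End QuotientModule.

Section BaerIdempotent.
Variable R : nzRingType.
Variable M : lmodType R^c.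
Variable K : M -> Prop.
Hypothesis sK : submod K.
Variable n : nat.
Variable v : 'I_n.+1 -> M.
Hypothesis gen : forall x : M, exists c : 'I_n.+1 -> R^c, x = \sum_i c i *: v i.
Local Notation Mat := 'M[R]_n.+1.

Definition colv (j : 'I_n.+1) (X : Mat) : M := \sum_i (X i j : R^c) *: v i.

Definition cols_in_K (s : Mat) : Prop := forall j, K (colv j s).
Definition annK (Y : Mat) : Prop := forall s, cols_in_K s -> Y * s = 0.

Lemma colvD j X Y : colv j (X + Y) = colv j X + colv j Y.
Proof. by rewrite /colv -big_split; apply: eq_bigr => i _; rewrite mxE scalerDl. Qed.

Lemma colv0 j : colv j 0 = 0.
Proof. by rewrite /colv big1 // => i _; rewrite mxE scale0r. Qed.

Lemma colvB j X Y : colv j (X - Y) = colv j X - colv j Y.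
Proof. by rewrite /colv -sumrB; apply: eq_bigr => i _; rewrite !mxE scalerDl scaleNr. Qed.

Lemma colvZ j (X : Mat) (a : R^c) : a *: colv j X = colv j (X * (a : R)%:M).
Proof.
rewrite /colv scaler_sumr; apply: eq_bigr => i _.
by rewrite scalerA -diag_const_mx -mulmxE mul_mx_diag !mxE.
Qed.

Lemma colv_mul (A X : Mat) : colv 0 (A * X) = \sum_k (X k 0 : R^c) *: colv k A.
Proof.
rewrite /colv; under eq_bigr do rewrite mxE scaler_suml.
rewrite exchange_big /=; apply: eq_bigr => k _.
by rewrite scaler_sumr; apply: eq_bigr => i _; rewrite scalerA.
Qed.

Lemma colv_surj y : exists X : Mat, colv 0 X == y.
Proof.
have [c ->] := gen y; exists (\matrix_(i, j) (c i : R)); apply/eqP.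
by apply: eq_bigr => i _; rewrite mxE.
Qed.

Definition code (y : M) : Mat := xchoose (colv_surj y).

Lemma colv_code y : colv 0 (code y) = y.
Proof. exact/eqP/(xchooseP (colv_surj y)). Qed.

Variable e : Mat.
Hypothesis e_idem : e * e = e.
Hypothesis e_ann : forall x, (forall s, annK s -> s * x = 0) <-> exists y, x = e * y.

Local Notation f := (1 - e).

Lemma f_e : f * e = 0. Proof. by rewrite mulrBl mul1r e_idem subrr. Qed.
Lemma f_idem : f * f = f. Proof. by rewrite mulrBr mulr1 f_e subr0. Qed.
Lemma e_plus_f : e + f = 1. Proof. by rewrite addrC subrK. Qed.

(* If the first column of W codes an element of K, then f W has first column
   zero: the matrix whose columns all equal that column lies in e M_{n+1}(R). *)
Lemma f_col0_K W : K (colv 0 W) -> forall i, (f * W) i 0 = 0.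
Proof.
move=> KW i; set s : Mat := \matrix_(i, j) W i 0.
have Ks : cols_in_K s.
  move=> j; suff -> : colv j s = colv 0 W by [].
  by apply: eq_bigr => k _; rewrite mxE.
have [y def_s] : exists y, s = e * y by apply/e_ann => Y annY; apply: annY.
have fs : f * s = 0 by rewrite mulrBl mul1r def_s mulrA e_idem subrr.
transitivity ((f * s) i 0); last by rewrite fs mxE.
rewrite [LHS]mxE [RHS]mxE; apply: eq_bigr => k _.
by congr (_ * _); rewrite /s mxE.
Qed.

Lemma f_col0_wd Z1 Z2 : colv 0 Z1 = colv 0 Z2 -> forall i, (f * Z1) i 0 = (f * Z2) i 0.
Proof.
move=> eqZ i; apply/eqP; rewrite -subr_eq0; apply/eqP.
have K12 : K (colv 0 (Z1 - Z2)) by rewrite colvB eqZ subrr; case: sK.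
by rewrite -(f_col0_K K12 i) mulrBr !mxE.
Qed.

(* A homomorphism M -> R vanishing on K kills the e-part of M: the matrix whose
   first row lists its values on the generators lies in the left annihilator. *)
Lemma hom_kills_e (phi : M -> RR R) : linear_on (@full_sub _ M) phi ->
  (forall k, K k -> phi k = 0) -> forall X, phi (colv 0 (e * X)) = 0.
Proof.
move=> linphi phiK X.
have phi_colv j Y : phi (colv j Y) = \sum_i (phi (v i) : R) * Y i j.
  by have [_ ->] := linear_on_sum (index_enum _) (fun i => Y i j : R^c) (w := v)
    (submod_full M) linphi (fun _ => I).
set C : Mat := \matrix_(i, j) (if i == 0 then (phi (v j) : R) else 0).
have annC : annK C.
  move=> s Ks; apply/matrixP => i j; rewrite [RHS]mxE mxE.
  under eq_bigr => k _ do rewrite /C mxE.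
  case: (i == 0); first by rewrite -[RHS](phiK _ (Ks j)) phi_colv.
  by rewrite big1 // => k _; rewrite mul0r.
have Ce : C * e = 0 by apply: ((e_ann e).2 (ex_intro _ 1 (esym (mulr1 e)))).
have := congr1 (fun A : Mat => (A * X) 0 0) Ce.
rewrite /= -mulrA mul0r [in X in _ = X -> _]mxE => <-.
rewrite phi_colv mxE; apply: eq_bigr => k _.
by congr (_ * _); rewrite /C mxE eqxx.
Qed.

Definition coord (y : M) (i : 'I_n.+1) : R := (f * code y) i 0.
Definition fproj (y : M) : M := colv 0 (f * code y).
Definition eproj (y : M) : M := colv 0 (e * code y).
Definition epart (y : M) : Prop := exists X, y = colv 0 (e * X).
Definition fpart (y : M) : Prop := exists X, y = colv 0 (f * X).

Lemma fproj_coord y : fproj y = \sum_i (coord y i : R^c) *: v i.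
Proof. by []. Qed.

Lemma eproj_fproj y : y = eproj y + fproj y.
Proof. by rewrite /eproj /fproj -colvD -mulrDl e_plus_f mul1r colv_code. Qed.

Lemma coordD x y i : coord (x + y) i = coord x i + coord y i.
Proof.
rewrite /coord (@f_col0_wd _ (code x + code y)) ?mulrDr ?mxE //.
by rewrite colvD !colv_code.
Qed.

Lemma coordZ (a : R^c) y i : coord (a *: y) i = coord y i * (a : R).
Proof.
rewrite /coord (@f_col0_wd _ (code y * (a : R)%:M)); last by rewrite -colvZ !colv_code.
by rewrite mulrA -diag_const_mx -mulmxE mul_mx_diag !mxE.
Qed.

Lemma coord_linear i : linear_on (@full_sub _ M) (fun z => coord z i : RR R).
Proof. by split => [x y _ _|a x _]; rewrite ?coordD ?coordZ. Qed.

Lemma coordK y i : K y -> coord y i = 0.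
Proof. by move=> Ky; apply: f_col0_K; rewrite colv_code. Qed.

Lemma coord_epart y i : epart y -> coord y i = 0.
Proof.
case=> X ->; rewrite /coord (@f_col0_wd _ (e * X)); last by rewrite colv_code.
by rewrite mulrA f_e mul0r mxE.
Qed.

Lemma fproj_id y : fpart y -> fproj y = y.
Proof.
case=> X ->; apply: eq_bigr => i _.
by rewrite /coord (@f_col0_wd _ (f * X)) ?colv_code // mulrA f_idem.
Qed.

Lemma fprojD x y : fproj (x + y) = fproj x + fproj y.
Proof. by rewrite !fproj_coord -big_split; apply: eq_bigr => i _; rewrite coordD scalerDl. Qed.

Lemma fprojZ a y : fproj (a *: y) = a *: fproj y.
Proof.
by rewrite !fproj_coord scaler_sumr; apply: eq_bigr => i _; rewrite coordZ scalerA.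
Qed.

Lemma eprojE y : eproj y = y - fproj y.
Proof. by apply/eqP; rewrite eq_sym subr_eq -eproj_fproj. Qed.

Lemma eproj_linear : linear_on (@full_sub _ M) eproj.
Proof.
split=> [x y _ _|a x _]; rewrite !eprojE; first by rewrite fprojD opprD addrACA.
by rewrite fprojZ scalerBr.
Qed.

Lemma eproj_epart y : epart (eproj y). Proof. by exists (code y). Qed.
Lemma fproj_fpart y : fpart (fproj y). Proof. by exists (code y). Qed.

Lemma eproj_id y : (forall i, coord y i = 0) -> eproj y = y.
Proof.
by move=> coord0; rewrite eprojE fproj_coord big1 ?subr0 // => i _; rewrite coord0 scale0r.
Qed.

Lemma epartP y : epart y <-> forall i, coord y i = 0.
Proof.
split=> [Ey i | coord0]; first exact: coord_epart.
by rewrite -(eproj_id coord0); apply: eproj_epart.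
Qed.

Lemma submod_epart : submod epart.
Proof.
split; first by exists 0; rewrite mulr0 colv0.
  by move=> x y [X ->] [Y ->]; exists (X + Y); rewrite mulrDr colvD.
by move=> a x [X ->]; exists (X * (a : R)%:M); rewrite mulrA -colvZ.
Qed.

Lemma submod_fpart : submod fpart.
Proof.
split; first by exists 0; rewrite mulr0 colv0.
  by move=> x y [X ->] [Y ->]; exists (X + Y); rewrite mulrDr colvD.
by move=> a x [X ->]; exists (X * (a : R)%:M); rewrite mulrA -colvZ.
Qed.

Lemma K_epart k : K k -> epart k.
Proof. by move=> Kk; apply/epartP => i; apply: coordK. Qed.

Lemma dsum_epart_fpart : dsum epart fpart.
Proof.
split; [exact: submod_epart | exact: submod_fpart | | ].
  move=> x Ex Fx; rewrite -(fproj_id Fx) fproj_coord big1 // => i _.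
  by rewrite coord_epart // scale0r.
move=> m; exists (eproj m), (fproj m).
by split; [exact: eproj_epart | exact: fproj_fpart | exact: eproj_fproj].
Qed.

(* The e-part of M is the bounded closure of K: the coordinate maps show that
   the bounded closure lies in it, and hom_kills_e shows that it is bounded
   over K. *)
Lemma Bcl_epart y : Bcl K y <-> epart y.
Proof.
split=> [[X [sX KX Xy bX]] | Ey].
  apply/epartP => i; apply: (bX (fun z => coord z i : RR R)) => //.
  by split; [apply: linear_on_sub; exact: coord_linear | move=> k Kk; rewrite coordK].
exists epart; split => //; [exact: submod_epart | exact: K_epart |].
move=> g [[gD gZ] gK] x [X ->].
have linh : linear_on (@full_sub _ M) (fun z => g (eproj z)).
  case: eproj_linear => eD eZ.
  by split=> [x1 y1 _ _|a x1 _]; rewrite ?eD ?eZ ?gD ?gZ //; apply: eproj_epart.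
have hK k : K k -> g (eproj k) = 0.
  move=> Kk; have -> : eproj k = k by apply: eproj_id => i; apply: coordK.
  exact: gK.
by rewrite -(hom_kills_e linh hK X) eproj_id // => i; apply: coord_epart; exists X.
Qed.

Definition fgen (k : 'I_n.+1) : M := colv k f.

Lemma fgen_fpart k : fpart (fgen k).
Proof.
exists (delta_mx k 0); rewrite colv_mul (bigD1 k) //= big1 => [|j /negbTE nj].
  by rewrite mxE !eqxx /= scale1r addr0.
by rewrite mxE nj /= scale0r.
Qed.

Lemma fproj_fgen y : fproj y = \sum_k (coord y k : R^c) *: fgen k.
Proof. by rewrite /fproj -{1}f_idem -mulrA colv_mul. Qed.

Lemma lift_fproj (A B : lmodType R^c) (g : A -> B) (X : M -> Prop) (phi : M -> B) :
  linear_on (@full_sub _ A) g -> (forall b, exists a, g a = b) ->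
  submod X -> linear_on X phi -> (forall k, X (fgen k)) ->
  exists h : M -> A, [/\ linear_on (@full_sub _ M) h, (forall y, epart y -> h y = 0)
     & forall y, g (h y) = phi (fproj y)].
Proof.
move=> ling gsurj sX linphi Xfgen.
have pre k : exists a, g a == phi (fgen k).
  by have [a ga] := gsurj (phi (fgen k)); exists a; apply/eqP.
pose a k := xchoose (pre k).
have ga k : g (a k) = phi (fgen k) by apply/eqP/(xchooseP (pre k)).
exists (fun y => \sum_k (coord y k : R^c) *: a k); split.
- split => [x y _ _|c x _].
    by rewrite -big_split; apply: eq_bigr => k _; rewrite coordD scalerDl.
  by rewrite scaler_sumr; apply: eq_bigr => k _; rewrite coordZ scalerA.
- by move=> y Ey; rewrite big1 // => k _; rewrite coord_epart // scale0r.
move=> y; rewrite fproj_fgen.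
have [_ ->] := linear_on_sum (index_enum _) (fun k => coord y k : R^c) (w := a)
  (submod_full A) ling (fun _ => I).
have [_ ->] := linear_on_sum (index_enum _) (fun k => coord y k : R^c) (w := fgen) sX linphi Xfgen.
by apply: eq_bigr => k _; rewrite ga.
Qed.

Lemma proj_Bcl : proj_sq (Bcl K) (@full_sub _ M).
Proof.
move=> A B g ling gsurj phi [linphi phiB].
have [h [linh hE gh]] := lift_fproj ling gsurj (submod_full M) linphi (fun _ => I).
exists h; split; first by split => // y /Bcl_epart; apply: hE.
move=> y _; rewrite gh {2}(eproj_fproj y).
case: linphi => phiD _; rewrite phiD // (phiB (eproj y)) ?add0r //.
by apply/Bcl_epart; apply: eproj_epart.
Qed.

Lemma proj_fpart : proj_sq (@zero_sub _ M) fpart.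
Proof.
move=> A B g ling gsurj phi [linphi phi0].
have [h [linh hE gh]] := lift_fproj ling gsurj submod_fpart linphi fgen_fpart.
exists h; split.
  split; first exact: linear_on_sub.
  by move=> y ->; apply: hE; case: submod_epart.
by move=> y Fy; rewrite gh fproj_id.
Qed.

Lemma fg_fpart : fg_sq (@zero_sub _ M) fpart.
Proof.
exists n.+1, fgen; split; first exact: fgen_fpart.
by move=> y Fy; exists (coord y); rewrite /zero_sub -fproj_fgen fproj_id // subrr.
Qed.

Lemma fg_Bcl : fg_sq (Bcl K) (@full_sub _ M).
Proof.
exists n.+1, v; split => // x _.
have [c def_x] := gen x; exists c; rewrite -def_x subrr.
by apply/Bcl_epart; case: submod_epart.
Qed.

Section StronglySemihereditary.
Hypothesis hNS : right_nonsingular R.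
Hypothesis hSS : forall N : lmodType R^c, fg_mod N -> nonsingular_mod N -> projective_mod N.

Lemma submod_Tcl : submod (Tcl K).
Proof. exact: (sing_rel_submod (sing_rel_submod sK)). Qed.

Lemma K_Tcl k : K k -> Tcl K k.
Proof. by move=> Kk; apply: (sub_sing_rel (sing_rel_submod sK)); apply: sub_sing_rel. Qed.

(* The coordinate maps vanish on K, hence on its Goldie closure. *)
Lemma Tcl_epart y : Tcl K y -> epart y.
Proof.
move=> Ty; apply/epartP => i.
apply: (hom_kills_sing_rel hNS (coord_linear i) _ Ty).
by apply: (hom_kills_sing_rel hNS (coord_linear i)) => z Kz; apply: coordK.
Qed.

Local Notation Mq := (quot submod_Tcl).
Local Notation qp := (qproj submod_Tcl).

Lemma quot_gen (q : Mq) : exists c : 'I_n.+1 -> R^c, q = \sum_i c i *: qp (v i).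
Proof.
have [c def_q] := gen (val q); exists c.
have [_ <-] := linear_on_sum (index_enum _) c (w := v) (submod_full M) (qproj_linear submod_Tcl)
  (fun _ => I).
by rewrite -def_q qproj_val.
Qed.

Lemma fg_quot : fg_mod Mq.
Proof.
exists n.+1, (fun i => qp (v i)); split => // q _.
by have [c def_q] := quot_gen q; exists c; rewrite /zero_sub -def_q subrr.
Qed.

Lemma nonsingular_quot : nonsingular_mod Mq.
Proof.
move=> q [I [essI Iq0]]; rewrite -(qproj_val q); apply/qproj_eq0.
apply: (sing_rel_idem hNS (sing_rel_submod sK)); exists I; split => // a Ia.
by apply/(qproj_eq0 submod_Tcl); rewrite qprojZ qproj_val; apply: Iq0.
Qed.

(* Conversely, if y lay outside cl_T(K), a map M / cl_T(K) -> R would separate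
   y from 0; but it kills K, hence the e-part. *)
Lemma epart_Tcl y : epart y -> Tcl K y.
Proof.
move=> [X def_y]; apply: NNPP => nTy.
have qy0 : qp y <> 0 by move/qproj_eq0.
have [phi [linphi phiy]] := projective_separates quot_gen (hSS fg_quot nonsingular_quot) qy0.
have linphiq : linear_on (@full_sub _ M) (fun z => phi (qp z)).
  case: linphi => phiD phiZ.
  by split=> [x1 y1 _ _|a x1 _]; rewrite ?qprojD ?qprojZ ?phiD ?phiZ.
apply: phiy; rewrite def_y; apply: (hom_kills_e linphiq) => k Kk.
have -> : qp k = 0 by apply/qproj_eq0; apply: K_Tcl.
exact: linear_on0 (submod_full Mq) linphi.
Qed.

Lemma Tcl_Bcl y : Tcl K y <-> Bcl K y.
Proof.
split=> [Ty | By]; first by apply/Bcl_epart; apply: Tcl_epart.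
by apply: epart_Tcl; apply/Bcl_epart.
Qed.

End StronglySemihereditary.
End BaerIdempotent.

Lemma Bcl_decomposition (R : nzRingType) (hbaer : forall n : nat, baer 'M[R]_n.+1)
  (M : lmodType R^c) (K : M -> Prop) : fg_mod M -> submod K ->
  [/\ fg_sq (Bcl K) (@full_sub _ M), proj_sq (Bcl K) (@full_sub _ M) &
      exists P, [/\ dsum (Bcl K) P, fg_sq (@zero_sub _ M) P & proj_sq (@zero_sub _ M) P]].
Proof.
move=> fgM sK; have [n [v gen]] := fg_generators fgM.
have [e [e_idem e_ann]] := hbaer n (annK K v).
split; [exact: (fg_Bcl sK gen e_idem e_ann) | exact: (proj_Bcl sK gen e_idem e_ann) |].
exists (fpart v e); split.
- rewrite (pred_ext (Bcl_epart sK gen e_idem e_ann)).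
  exact: (dsum_epart_fpart sK gen e_idem e_ann).
- exact: (fg_fpart sK gen e_idem e_ann).
- exact: (proj_fpart sK gen e_idem e_ann).
Qed.

Lemma Tcl_eq_Bcl (R : nzRingType) (hbaer : forall n : nat, baer 'M[R]_n.+1)
  (hSS : right_strongly_semihereditary R)
  (M : lmodType R^c) (K : M -> Prop) : fg_mod M -> submod K ->
  forall x, Tcl K x <-> Bcl K x.
Proof.
move=> fgM sK; have [n [v gen]] := fg_generators fgM.
have [e [e_idem e_ann]] := hbaer n (annK K v).
have [hNS hproj] := hSS.
exact: (Tcl_Bcl sK gen e_idem e_ann hNS hproj).
Qed.

Theorem mainTheorem4 (R : nzRingType)
  (hsh : right_semihereditary R)
  (hbaer : forall n : nat, baer 'M[R]_n.+1)
  (M : lmodType R^c) (hM : fg_mod M)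
  (K : M -> Prop) (hK : submod K) :
  (* (1) *)
  ( fg_sq (Bcl K) (@full_sub _ M) /\ proj_sq (Bcl K) (@full_sub _ M) /\
    summand (Bcl K) /\
    exists U : M -> Prop, [/\ dsum (Bcl (@zero_sub _ M)) U,
                             fg_sq (@zero_sub _ M) U & proj_sq (@zero_sub _ M) U] )
  /\
  (* (2) *)
  ( right_strongly_semihereditary R ->
    (forall x, Tcl K x <-> Bcl K x) /\ summand (Tcl K) /\
    (forall N : lmodType R^c, fg_mod N ->
       (bounded_mod N <-> Gtorsion_mod N) /\
       (Btorsionfree_mod N <-> Gtorsionfree_mod N)) /\
    exists P S : M -> Prop, [/\ dsum P S, fg_sq (@zero_sub _ M) P,
                              proj_sq (@zero_sub _ M) P & singular_sub S] ).
Proof.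
have [fgB projB [P [dsP fgP projP]]] := Bcl_decomposition hbaer hM hK.
have [_ _ [U [dsU fgU projU]]] := Bcl_decomposition hbaer hM (submod_zero M).
split; first by do 3!split => //; [exists P | exists U].
move=> hSS; have [hNS _] := hSS.
have TBK := Tcl_eq_Bcl hbaer hSS hM hK.
split=> //; split; first by rewrite (pred_ext TBK); exists P.
split=> [N fgN | ].
  have TB0 := Tcl_eq_Bcl hbaer hSS fgN (submod_zero N).
  split; last by split=> tf x /TB0; apply: tf.
  split=> [bN x | tN]; first by apply/TB0; apply: (bounded_modE N).1.
  by apply/(bounded_modE N).2 => x; apply/TB0.
exists U, (Bcl (@zero_sub _ M)); split => //; first exact: dsumC.
move=> x Bx; apply: (sing_rel_idem hNS (submod_zero M)).
by apply/(Tcl_eq_Bcl hbaer hSS hM (submod_zero M)).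
Qed.
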